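(* Assume the refinement-probability condition with $\delta_+\in(0,1]$ and fix $\delta_-\in(0,1)$. Suppose that whenever the GSR algorithm introduces a new level $m$ it draws an i.i.d. batch of size $J$ from $\mathsf{Gen}(a,m)$, where $a$ is the anchor at that call, with $$J:=\Big\lceil\frac{\log((\overline m_T+1)/\delta_-)}{\log(1/(1-\delta_+))}\Big\rceil\le\Big\lceil\frac1{\delta_+}\log\frac{\overline m_T+1}{\delta_-}\Big\rceil.$$ Then with probability at least $1-\delta_-$, simultaneously for every level $m\in\{1,\dots,\overline m_T\}$ that is introduced, the corresponding batch contains some task $i_m$ with $U^\star-U^{(i_m)}\le\epsilon^U_m$.
   Context: Tasks have long-run values $U^{(i)}\in[0,1]$, $U^\star:=\sup_iU^{(i)}$; $\epsilon^U_m:=\epsilon^U_02^{-m}$. The GSR algorithm maintains a level counter $m\in\{0,\dots,\overline m_T\}$ and an anchor task $a_t$ with uncertainty width $w_t$; it increments the level from $m-1$ to $m$ (introduces level $m$) only at a round where $w_t\le c_g\epsilon^U_{m-1}$ (constant $c_g>0$), and at that moment adds a batch from $\mathsf{Gen}(a_t,m)$; each level is introduced at most once. Refinement-probability condition: there is $\delta_+\in(0,1]$ such that for every $m\ge1$ and every anchor with $w_t\le c_g\epsilon^U_{m-1}$, a single draw from $\mathsf{Gen}(a_t,m)$ is $\epsilon^U_m$-optimal (i.e. $U^\star-U^{(i)}\le\epsilon^U_m$) with probability at least $\delta_+$. *)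

From HB Require Import structures.
From mathcomp Require Import all_boot all_order all_algebra.
From mathcomp Require Import all_classical all_reals all_analysis.
Set Implicit Arguments. Unset Strict Implicit. Unset Printing Implicit Defensive.
Import Order.TTheory GRing.Theory Num.Theory.
Local Open Scope classical_set_scope.
Local Open Scope ring_scope.

Definition epsU (R : realType) (eps0 : R) (m : nat) : R := eps0 / 2 ^+ m.

Definition Ustar (R : realType) (T : Type) (U : T -> R) : R := sup (range U).

Definition eps_opt (R : realType) (T : Type) (U : T -> R) (eps0 : R) (m : nat)
  : set T := [set i | Ustar U - U i <= epsU eps0 m].

(* The batch size J = ceil( log((mbar+1)/delta_-) / log(1/(1-delta_+)) ).
   For delta_+ = 1 the formula degenerates (log(1/0)); we then take J = 1. *)
Definition batch_size (R : realType) (dplus dminus : R) (mbar : nat) : nat :=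
  if dplus < 1 then
    `|Num.ceil (ln (mbar.+1%:R / dminus) / ln ((1 - dplus)^-1))|%N
  else 1%N.

(* Conditional i.i.d. batch: given the history sigma-algebra G (with respect
   to which the anchor A is measurable), the J draws D j are i.i.d. with law
   K (A x), i.e. for every history event H and measurable sets B_j,
   P(H /\ forall j, D j in B j) = E[ 1_H * prod_j K (A .) (B j) ]. *)
Definition cond_iid_batch d d' (Omega : measurableType d)
  (Tk : measurableType d') (R : realType) (P : probability Omega R)
  (G : set (set Omega)) (J : nat) (A : Omega -> Tk)
  (K : R.-pker Tk ~> Tk) (D : 'I_J -> Omega -> Tk) : Prop :=
  [/\ sigma_algebra setT G, G `<=` measurable,
      (forall B, measurable B -> G (A @^-1` B)) &
      forall H, G H -> forall B : 'I_J -> set Tk, (forall j, measurable (B j)) ->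
        P (H `&` \bigcap_(j in [set: 'I_J]) (D j @^-1` B j))
        = (\int[P]_(x in H) (\prod_(j < J) K (A x) (B j)))%E ].

From HB Require Import structures.
From mathcomp Require Import all_boot all_order all_algebra.
From mathcomp Require Import all_classical all_reals all_analysis.
From mathcomp Require Import measurable_realfun lra.

Set Implicit Arguments.
Unset Strict Implicit.
Unset Printing Implicit Defensive.
Import Order.TTheory GRing.Theory Num.Theory.
Local Open Scope classical_set_scope.
Local Open Scope ring_scope.

(* For a level m, the bad event "m is introduced and every draw of its batch
   misses the eps_m-optimal set" has probability E[1_Intro * prod_j Gen(A)(miss)],
   and on Intro each factor is at most 1 - delta_+, so the bad event has
   probability at most (1 - delta_+)^J.  Since ln (1/(1 - delta_+)) >= delta_+,
   the choice of J makes (mbar + 1) (1 - delta_+)^J <= delta_-, and a union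
   bound over the levels concludes. *)

Lemma prode_le_exprn (R : realDomainType) (c : R) n (f : 'I_n -> \bar R) :
  (forall i, 0 <= f i)%E -> (forall i, f i <= c%:E)%E ->
  (\prod_(i < n) f i <= (c ^+ n)%:E)%E.
Proof.
elim: n f => [|n IH] f f0 fc; first by rewrite big_ord0 expr0.
rewrite big_ord_recr /= exprSr EFinM.
by apply: lee_pmul => //; [exact: prode_ge0 | exact: IH].
Qed.

Lemma emeasurable_fun_prod (R : realType) d (T : measurableType d) (D : set T)
    (I : Type) (s : seq I) (P : pred I) (h : I -> T -> \bar R) :
  (forall i, measurable_fun D (h i)) ->
  measurable_fun D (fun x => \prod_(i <- s | P i) h i x)%E.
Proof.
move=> mh; elim: s => [|a s IH].
  by under eq_fun do rewrite big_nil; exact: measurable_cst.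
under eq_fun do rewrite big_cons; case: (P a) => //.
exact: emeasurable_funM.
Qed.

Lemma pker_setC d d' (X : measurableType d) (Y : measurableType d')
    (R : realType) (k : R.-pker X ~> Y) (x : X) (S : set Y) :
  measurable S -> k x (~` S) = (1 - k x S)%E.
Proof.
move=> mS; have kT : k x [set: Y] = 1%E by exact: prob_kernel.
have kU := measureU (k x) mS (measurableC mS) (setICr S).
rewrite setUCr in kU; rewrite (etrans (esym kT) kU).
have kS_fin : k x S \is a fin_num.
  rewrite ge0_fin_numE // (le_lt_trans _ (ltry 1)) // -kT.
  by apply: le_measure; rewrite ?inE.
by rewrite [k x S + _]addeC addeK.
Qed.

Lemma le_lnV1B (R : realType) (x : R) : x < 1 -> x <= ln (1 - x)^-1.
Proof.
move=> x_lt1; rewrite lnV ?posrE ?subr_gt0 // lerNr.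
by rewrite -[1 - x]/(1 + - x) le_ln1Dx // ltrN2.
Qed.

Section batch_size.
Variables (R : realType) (dplus dminus : R) (mbar : nat).
Hypotheses (dplus01 : 0 < dplus <= 1) (dminus01 : 0 < dminus < 1).

Let N : R := mbar.+1%:R.

Let ln_N_dminus_gt0 : 0 < ln (N / dminus).
Proof.
case/andP: dminus01 => dm0 dm1; apply: ln_gt0.
by rewrite ltr_pdivlMr // mul1r (lt_le_trans dm1) // ler1n.
Qed.

Lemma batch_size_le_ceil :
  (batch_size dplus dminus mbar
     <= `|Num.ceil (dplus^-1 * ln (mbar.+1%:R / dminus))|)%N.
Proof.
case/andP: dplus01 => dp0 dp1; rewrite /batch_size -/N; case: ifPn => dp_lt1.
  have lnq_ge : dplus <= ln (1 - dplus)^-1 by exact: le_lnV1B.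
  have lnq_gt0 : 0 < ln (1 - dplus)^-1 by exact: lt_le_trans lnq_ge.
  have ceil_ge0_of_gt0 (y : R) : 0 < y -> 0 <= Num.ceil y.
    by move=> ?; rewrite ltW ?ceil_gt0.
  rewrite -lez_nat !abszE.
  rewrite !ger0_norm ?ceil_ge0_of_gt0 ?divr_gt0 ?mulr_gt0 ?invr_gt0 //.
  by rewrite le_ceil // mulrC ler_wpM2r ?(ltW ln_N_dminus_gt0) // lef_pV2 ?posrE.
by rewrite absz_gt0 gt_eqF // ceil_gt0 ?mulr_gt0 ?invr_gt0.
Qed.

Lemma batch_size_failure_le :
  (1 - dplus) ^+ batch_size dplus dminus mbar * mbar.+1%:R <= dminus.
Proof.
case/andP: dplus01 => dp0 dp1; case/andP: dminus01 => dm0 _.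
rewrite /batch_size -/N; case: ifPn => dp_lt1; last first.
  have -> : dplus = 1 by lra.
  by rewrite subrr expr1 mul0r ltW.
set q := 1 - dplus; have q_gt0 : 0 < q by rewrite subr_gt0.
have lnq_gt0 : 0 < ln q^-1 by apply: ln_gt0; rewrite invf_gt1 // /q; lra.
set z := Num.ceil _; have z_ge0 : 0 <= z by rewrite ltW // ceil_gt0 divr_gt0.
have qJ_gt0 : 0 < q ^+ `|z| by rewrite exprn_gt0.
have ln_le : ln (N / dminus) <= ln (q ^+ `|z|)^-1.
  rewrite -exprVn lnXn ?invr_gt0 // -mulr_natl -ler_pdivrMr //.
  by rewrite natr_absz ger0_norm // ceil_ge.
rewrite ler_ln ?posrE ?invr_gt0 ?divr_gt0 ?ltr0n // in ln_le.
rewrite ler_pdivrMr // in ln_le.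
by have := ler_wpM2l (ltW qJ_gt0) ln_le; rewrite mulrA mulfV ?gt_eqF // mul1r.
Qed.

End batch_size.

Lemma measurable_eps_opt (R : realType) d (T : measurableType d) (U : T -> R)
    (eps0 : R) (m : nat) :
  measurable_fun setT U -> measurable (eps_opt U eps0 m).
Proof.
move=> mU; have -> : eps_opt U eps0 m = U @^-1` `[Ustar U - epsU eps0 m, +oo[.
  by apply/seteqP; split => x;
    rewrite /eps_opt /= in_itv /= andbT lerBlDl addrC -lerBlDl.
by rewrite -[_ @^-1` _]setTI; exact: mU.
Qed.

Lemma probability_setC_bigsetU_ge d (T : measurableType d) (R : realType)
    (P : probability T R) (F : nat -> set T) (n : nat) (c : R) :
  (forall i, (i < n)%N -> measurable (F i)) ->
  (forall i, (i < n)%N -> P (F i) <= c%:E)%E ->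
  ((1 - c *+ n)%:E <= P (~` \big[setU/set0]_(i < n) F i))%E.
Proof.
move=> mF PF; rewrite probability_setC; last first.
  by apply: bigsetU_measurable => i _; exact: mF.
rewrite EFinB leeB // (le_trans (Boole_inequality _ mF)) //.
have -> : c *+ n = \sum_(i < n) c by rewrite sumr_const card_ord.
by rewrite -sumEFin; apply: lee_sum => i _; exact: PF.
Qed.

Section cond_iid_batch.
Context d d' (Omega : measurableType d) (T : measurableType d') (R : realType).
Variables (P : probability Omega R) (G : set (set Omega)) (J : nat).
Variables (A : Omega -> T) (K : R.-pker T ~> T) (D : 'I_J -> Omega -> T).
Hypothesis iid : cond_iid_batch P G A K D.

Lemma cond_iid_batch_measurable_anchor : measurable_fun setT A.
Proof.
case: iid => _ Gm GA _ _ B mB; rewrite setTI; exact/Gm/GA.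
Qed.

Lemma cond_iid_batch_all_le (H : set Omega) (B : set T) (q : R) :
  G H -> measurable B -> 0 <= q -> (forall x, H x -> K (A x) B <= q%:E)%E ->
  (P (H `&` \bigcap_(j in [set: 'I_J]) D j @^-1` B) <= (q ^+ J)%:E)%E.
Proof.
move=> GH mB q_ge0 KB; case: iid => _ Gm _ iidE.
have mH : measurable H := Gm _ GH.
rewrite (iidE _ GH (fun=> B)) //.
apply: (@le_trans _ _ (\int[P]_(x in H) (q ^+ J)%:E)%E).
  apply: ge0_le_integral => //.
  - by move=> x _; apply: prode_ge0 => j _.
  - apply: emeasurable_fun_prod => j; apply: measurable_funS measurableT _ _ => //.
    apply: measurableT_comp (measurable_kernel K _ mB) _.
    exact: cond_iid_batch_measurable_anchor.
  - by move=> x Hx; apply: prode_le_exprn => j; [exact: measure_ge0 | exact: KB].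
rewrite integral_cst // muleC gee_pMl ?probability_le1 ?lee_fin ?exprn_ge0 //.
by rewrite ge0_fin_numE ?(le_lt_trans (probability_le1 P mH)) ?ltry.
Qed.

End cond_iid_batch.

Lemma all_levels_hit_setC (T I : Type) (n : nat) (E : nat -> set T)
    (hit : nat -> I -> set T) :
  [set w | forall m, (1 <= m <= n)%N -> E m w -> exists j, hit m j w]
  = ~` \big[setU/set0]_(i < n) (E i.+1 `&` \bigcap_(j in [set: I]) ~` hit i.+1 j).
Proof.
rewrite -(bigcup_mkord n
  (fun i => E i.+1 `&` \bigcap_(j in [set: I]) ~` hit i.+1 j)).
apply/seteqP; split => w /=.
  move=> all_hit [i /= ltin [Ew miss]].
  by have [j] := all_hit i.+1 ltin Ew; exact: miss.
move=> no_miss m /andP[m_gt0 m_le] Em; apply: contrapT => none; apply: no_miss.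
exists m.-1; first by rewrite /= prednK.
by rewrite prednK //; split => // j _ hit_j; apply: none; exists j.
Qed.

Theorem lemmaC19 (R : realType) (d d' : measure_display)
  (Omega : measurableType d) (Task : measurableType d')
  (P : probability Omega R)
  (U : Task -> R) (eps0 cg dplus dminus : R) (mbar : nat)
  (Gen : nat -> R.-pker Task ~> Task)
  (Intro : nat -> set Omega) (A : nat -> Omega -> Task) (W : nat -> Omega -> R)
  (G : nat -> set (set Omega))
  (D : nat -> 'I_(batch_size dplus dminus mbar) -> Omega -> Task) :
  measurable_fun setT U -> (forall i, 0 <= U i <= 1) ->
  0 < eps0 -> 0 < cg ->
  0 < dplus <= 1 -> 0 < dminus < 1 ->
  (* level m is introduced only when the anchor width is <= c_g eps_{m-1} *)
  (forall m, (1 <= m <= mbar)%N -> forall w, Intro m w ->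
     W m w <= cg * epsU eps0 m.-1) ->
  (* refinement-probability condition *)
  (forall m, (1 <= m <= mbar)%N -> forall w,
     W m w <= cg * epsU eps0 m.-1 ->
     (dplus%:E <= Gen m (A m w) (eps_opt U eps0 m))%E) ->
  (forall m, (1 <= m <= mbar)%N ->
     [/\ measurable (Intro m), G m (Intro m), measurable_fun setT (A m)
       & forall j, measurable_fun setT (D m j)]) ->
  (* the batch for level m is i.i.d. from Gen(a, m), a the anchor at that call *)
  (forall m, (1 <= m <= mbar)%N ->
     cond_iid_batch P (G m) (A m) (Gen m) (D m)) ->
  (batch_size dplus dminus mbar
     <= `|Num.ceil (dplus^-1 * ln (mbar.+1%:R / dminus))|)%N /\
  ((1 - dminus)%:E <=
     P [set w | forall m, (1 <= m <= mbar)%N -> Intro m w ->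
                  exists j, eps_opt U eps0 m (D m j w)])%E.
Proof.
move=> mU _ _ _ dplus01 dminus01 width_Intro Gen_opt meas iid.
split; first exact: batch_size_le_ceil.
set J := batch_size dplus dminus mbar.
pose bad i := Intro i.+1 `&`
  \bigcap_(j in [set: 'I_J]) D i.+1 j @^-1` ~` eps_opt U eps0 i.+1.
have mopt m : measurable (eps_opt U eps0 m) by exact: measurable_eps_opt.
have mbad i : (i < mbar)%N -> measurable (bad i).
  move=> lvl; have [mI _ _ mD] := meas i.+1 lvl.
  apply: measurableI => //; apply: fin_bigcap_measurable => // j _.
  by rewrite -[_ @^-1` _]setTI; apply: mD => //; exact: measurableC.
have Pbad i : (i < mbar)%N -> (P (bad i) <= ((1 - dplus) ^+ J)%:E)%E.
  move=> lvl; have [_ GI _ _] := meas i.+1 lvl.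
  apply: (cond_iid_batch_all_le (iid i.+1 lvl) GI (measurableC (mopt i.+1))).
    by rewrite subr_ge0; case/andP: dplus01.
  move=> x Ix; rewrite pker_setC // EFinB leeB //.
  exact: Gen_opt i.+1 lvl x (width_Intro i.+1 lvl x Ix).
rewrite all_levels_hit_setC.
apply: (le_trans _ (probability_setC_bigsetU_ge mbad Pbad)).
rewrite lee_fin lerD2l lerN2 -mulr_natr.
apply: (le_trans _ (batch_size_failure_le mbar dplus01 dminus01)).
by rewrite ler_wpM2l ?ler_nat // exprn_ge0 // subr_ge0; case/andP: dplus01.
Qed.
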